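(* For every class $K$ of algebras of type $\tau$: (1) $H\mathbf Q(K)=\mathbf S\mathbf P\mathbf P_u\mathbf D(K)$; (2) $H\mathbf Q(K)=\mathbf S\mathbf P_u\mathbf P\mathbf D(K)$; (3) $H\mathbf Q(K)=\mathbf S\mathbf P_u\mathbf P_\omega\mathbf D(K)$; (4) $H\mathbf Q(K)=\mathbf S\mathbf L_s\mathbf P\mathbf D(K)=\mathbf L_s\mathbf S\mathbf P\mathbf D(K)=\mathbf L_s\mathbf P_s\mathbf S\mathbf D(K)$.
   Context: A hypersubstitution $\sigma$ of type $\tau$ assigns to each $n$-ary operation symbol an $n$-ary term of type $\tau$, extended to all terms; derived algebras $\mathbf A^\sigma$ replace each fundamental operation $f_\gamma$ by $\sigma(f_\gamma)^{\mathbf A}$, and $\mathbf D(K)$ is the class of derived algebras of members of $K$. A hyper-quasi-identity $\bigwedge_{i<n}(t_i=s_i)\to(t_n=s_n)$ (operation symbols read as hypervariables) is hypersatisfied in $\mathbf A$ if for every hypersubstitution $\sigma$ the quasi-identity $\bigwedge_{i<n}(\sigma(t_i)=\sigma(s_i))\to(\sigma(t_n)=\sigma(s_n))$ holds in $\mathbf A$. $H\mathbf Q(K)$ is the class of all algebras of type $\tau$ that hypersatisfy every hyper-quasi-identity hypersatisfied in all members of $K$. $\mathbf S,\mathbf P,\mathbf P_s,\mathbf P_u,\mathbf P_\omega$ denote closure up to isomorphism under subalgebras, direct products, subdirect products, ultraproducts and finite direct products; $\mathbf L_s$ denotes closure under superdirect limits (direct limits of direct spectra over up-directed posets whose connecting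 homomorphisms are surjective). Convention: the direct product of the empty family is the trivial (one-element) algebra. *)

From Stdlib Require Import List ClassicalEpsilon.
From mathcomp Require Import all_boot.

Set Implicit Arguments.
Unset Strict Implicit.
Unset Printing Implicit Defensive.

Record signature := Signature { op :> Type; arity : op -> nat }.

Record alg (sg : signature) := Alg {
  car :> Type;
  car_inh : inhabited car;
  ops : forall f : sg, ('I_(arity f) -> car) -> car }.

Arguments ops {sg} a f args.

Section Universal.
Variable sg : signature.

Inductive term (X : Type) : Type :=
  | Var : X -> term X
  | App : forall f : sg, ('I_(arity f) -> term X) -> term X.

Arguments Var {X} x.
Arguments App {X} f ts.

Fixpoint eval (A : alg sg) (X : Type) (v : X -> A) (t : term X) : A :=
  match t with
  | Var x => v x
  | App f ts => ops A f (fun j => eval v (ts j))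
  end.

Fixpoint tsubst (Y X : Type) (t : term Y) (s : Y -> term X) : term X :=
  match t with
  | Var y => s y
  | App f ts => App f (fun j => tsubst (ts j) s)
  end.

(** Hypersubstitutions: each n-ary operation symbol goes to an n-ary term
    (a term in the variables x_0, ..., x_{n-1}). *)
Definition hypersubst := forall f : sg, term 'I_(arity f).

Fixpoint hext (sigma : hypersubst) (X : Type) (t : term X) : term X :=
  match t with
  | Var x => Var x
  | App f ts => tsubst (sigma f) (fun j => hext sigma (ts j))
  end.

Definition derived (A : alg sg) (sigma : hypersubst) : alg sg :=
  @Alg sg (car A) (car_inh A) (fun f args => eval args (sigma f)).

Definition is_hom (A B : alg sg) (h : A -> B) : Prop :=
  forall (f : sg) (args : 'I_(arity f) -> A),
    h (ops A f args) = ops B f (fun j => h (args j)).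

Definition injectiveP (T U : Type) (h : T -> U) := forall x y, h x = h y -> x = y.
Definition surjectiveP (T U : Type) (h : T -> U) := forall y, exists x, h x = y.

Definition is_iso (A B : alg sg) (h : A -> B) : Prop :=
  is_hom h /\ injectiveP h /\ surjectiveP h.

(** Direct product of a family of algebras (the empty product is trivial). *)
Definition prod_alg (I : Type) (B : I -> alg sg) : alg sg :=
  @Alg sg (forall i, B i)
    (inhabits (fun i => epsilon (car_inh (B i)) (fun _ => True)))
    (fun f args i => ops (B i) f (fun j => args j i)).

Definition cls := alg sg -> Prop.
Definition Ceq (C1 C2 : cls) : Prop := forall A, C1 A <-> C2 A.

Definition Dop (K : cls) : cls :=
  fun A => exists B sigma, K B /\ A = derived B sigma.

Definition Sop (K : cls) : cls :=
  fun A => exists B, K B /\ exists h : A -> B, is_hom h /\ injectiveP h.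

Definition Pgen (C : Type -> Prop) (K : cls) : cls :=
  fun A => exists (I : Type) (B : I -> alg sg), C I /\ (forall i, K (B i)) /\
    exists h : A -> prod_alg B, is_iso h.

Definition Pop (K : cls) : cls := Pgen (fun _ => True) K.

Definition finite_type (I : Type) : Prop := exists l : list I, forall i, In i l.
Definition Pwop (K : cls) : cls := Pgen finite_type K.

Definition Psop (K : cls) : cls :=
  fun A => exists (I : Type) (B : I -> alg sg), (forall i, K (B i)) /\
    exists e : A -> prod_alg B, is_hom e /\ injectiveP e /\
      forall i, surjectiveP (fun a => e a i).

Definition ultrafilter (I : Type) (F : (I -> Prop) -> Prop) : Prop :=
  F (fun _ => True) /\ ~ F (fun _ => False) /\
  (forall X Y : I -> Prop, F X -> (forall i, X i -> Y i) -> F Y) /\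
  (forall X Y : I -> Prop, F X -> F Y -> F (fun i => X i /\ Y i)) /\
  (forall X : I -> Prop, F X \/ F (fun i => ~ X i)).

(** P_u: ultraproducts, up to isomorphism: A is (isomorphic to) the quotient
    of prod B by the congruence x ~ y iff {i | x i = y i} is in F, i.e. there
    is a surjective homomorphism from prod B onto A with exactly that kernel. *)
Definition Puop (K : cls) : cls :=
  fun A => exists (I : Type) (B : I -> alg sg) (F : (I -> Prop) -> Prop),
    ultrafilter F /\ (forall i, K (B i)) /\
    exists h : prod_alg B -> A, is_hom h /\ surjectiveP h /\
      forall x y, h x = h y <-> F (fun i => x i = y i).

Definition updirected_poset (I : Type) (le : I -> I -> Prop) : Prop :=
  (forall i, le i i) /\
  (forall i j, le i j -> le j i -> i = j) /\
  (forall i j k, le i j -> le j k -> le i k) /\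
  inhabited I /\
  (forall i j, exists k, le i k /\ le j k).

(** A is (isomorphic to) the
    direct limit iff there are compatible homomorphisms g_i : B_i -> A that are
    jointly surjective and identify exactly the eventually-equal elements. *)
Definition Lsop (K : cls) : cls :=
  fun A => exists (I : Type) (le : I -> I -> Prop) (B : I -> alg sg)
    (h : forall i j, le i j -> B i -> B j),
    updirected_poset le /\ (forall i, K (B i)) /\
    (forall i j (p : le i j), is_hom (h i j p) /\ surjectiveP (h i j p)) /\
    (forall i (p : le i i) x, h i i p x = x) /\
    (forall i j k (p : le i j) (q : le j k) (r : le i k) x,
        h j k q (h i j p x) = h i k r x) /\
    exists g : forall i, B i -> A,
      (forall i, is_hom (g i)) /\
      (forall i j (p : le i j) x, g j (h i j p x) = g i x) /\
      (forall a, exists i x, g i x = a) /\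
      (forall i x y, g i x = g i y <-> exists k (p : le i k), h i k p x = h i k p y).

Record qid := Qid {
  qprem : list (term nat * term nat);
  qconcl : term nat * term nat }.

Definition hypersat (A : alg sg) (q : qid) : Prop :=
  forall (sigma : hypersubst) (v : nat -> A),
    (forall p, In p (qprem q) -> eval v (hext sigma p.1) = eval v (hext sigma p.2)) ->
    eval v (hext sigma (qconcl q).1) = eval v (hext sigma (qconcl q).2).

Definition HQ (K : cls) : cls :=
  fun A => forall q : qid, (forall B, K B -> hypersat B q) -> hypersat A q.

End Universal.

(* HQ(K) coincides with Q(D(K)), the class of models of the quasi-identities
   valid in D(K): a hypersubstitution applied to a quasi-identity is again a
   quasi-identity, and derived algebras of derived algebras are derived algebras.
   So everything reduces to characterizations of Q(X) for an arbitrary class X.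

   All the operators involved preserve quasi-identities; for L_s this is because
   a quasi-identity mentions finitely many elements and equalities, which are all
   realized at a single stage of the spectrum.

   Conversely let A be in Q(X).  Given finitely many equations valid in A and
   elements a <> b, the quasi-identity with the elements of A as variables yields
   a map w : A -> B into a member of X satisfying these equations and separating
   a from b.  An ultraproduct over the directed set of all such finite data turns
   these maps into an embedding, which gives S P_u P_omega and S P P_u.  Ordering
   the finite sets P of valid equations by inclusion, A is the superdirect limit
   of the algebras presented by A and P relative to X, each of which is a
   subdirect product of subalgebras of members of X.  Finally an ultraproduct is
   the superdirect limit of the products over the members of the ultrafilter,
   which turns S P_u P_omega into S L_s P. *)

From Stdlib Require Import List Classical ClassicalEpsilon.
From Stdlib Require Import FunctionalExtensionality PropExtensionality ProofIrrelevance.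
From mathcomp Require Import all_boot.
From mathcomp Require classical_sets filter.
Set Implicit Arguments.
Unset Strict Implicit.
Unset Printing Implicit Defensive.

Definition updirected_preorder (J : Type) (le : J -> J -> Prop) : Prop :=
  inhabited J /\ (forall j, le j j) /\ (forall i j k, le i j -> le j k -> le i k) /\
  (forall i j, exists k, le i k /\ le j k).

Lemma ultrafilter_refining_directed (J : Type) (le : J -> J -> Prop) :
  updirected_preorder le ->
  exists F : (J -> Prop) -> Prop, ultrafilter F /\ forall j, F (fun k => le j k).
Proof.
move=> [[j0] [refl [trans dir]]].
pose G (X : J -> Prop) := exists j, forall k, le j k -> X k.
have GF : filter.ProperFilter G.
  apply: filter.Build_ProperFilter_ex.
    by move=> P [j Hj]; exists j; apply: Hj; apply: refl.
  split.
  - by exists j0.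
  - move=> X Y [j1 H1] [j2 H2]; have [k [k1 k2]] := dir j1 j2.
    by exists k => l kl; split; [apply: H1 | apply: H2]; apply: trans kl.
  - by move=> P Q PQ [j Hj]; exists j => k /Hj /PQ.
have [U [UU GU]] := filter.ultraFilterLemma GF.
exists U; split; last by move=> j; apply: GU; exists j.
split; first exact: (@filter.filterT _ U _).
split; first exact: (@filter.filter_not_empty _ U _).
split; first by move=> X Y FX XY; apply: (@filter.filterS _ U _ X Y).
split; first by move=> X Y FX FY; apply: (@filter.filterI _ U _ X Y).
by move=> X; apply: (@filter.in_ultra_setVsetC _ U X UU).
Qed.

Lemma ultrafilter_all_In (I T : Type) (F : (I -> Prop) -> Prop) (l : list T) (P : T -> I -> Prop) :
  ultrafilter F -> (forall p, In p l -> F (P p)) -> F (fun i => forall p, In p l -> P p i).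
Proof.
move=> [FT [_ [FS [FI _]]]]; elim: l => [|a l IH] H.
  by apply: (FS _ _ FT) => i _ p [].
have Fa := H a (or_introl erefl).
have Fl := IH (fun p Hp => H p (or_intror Hp)).
by apply: (FS _ _ (FI _ _ Fa Fl)) => i [Ha Hl] p [<-|Hp]; auto.
Qed.

Lemma mem_In (T : eqType) (x : T) (s : seq T) : x \in s -> In x s.
Proof. by elim: s => //= y s IH; rewrite in_cons => /orP [/eqP ->|/IH]; auto. Qed.

Section Terms.
Variable sg : signature.
Implicit Types (A B : alg sg).

Lemma eval_tsubst A (X Y : Type) (t : term sg Y) (s : Y -> term sg X) (v : X -> A) :
  eval v (tsubst t s) = eval (fun y => eval v (s y)) t.
Proof.
elim: t => [y|f ts IH] //=; congr (ops A f).
by apply: functional_extensionality => j; exact: IH.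
Qed.

Lemma tsubst_comp X Y Z (t : term sg Z) (s1 : Z -> term sg Y) (s2 : Y -> term sg X) :
  tsubst (tsubst t s1) s2 = tsubst t (fun z => tsubst (s1 z) s2).
Proof.
elim: t => [z|f ts IH] //=; congr (@App _ _ f).
by apply: functional_extensionality => j; exact: IH.
Qed.

Lemma eval_hext A (sigma : hypersubst sg) X (v : X -> A) t :
  eval v (hext sigma t) = eval (A := derived A sigma) v t.
Proof.
elim: t => [x|f ts IH] //=; rewrite eval_tsubst /=; congr (eval _ _).
by apply: functional_extensionality => j; exact: IH.
Qed.

Lemma hom_eval A B (h : A -> B) X (v : X -> A) t :
  is_hom h -> h (eval v t) = eval (fun x => h (v x)) t.
Proof.
move=> hh; elim: t => [x|f ts IH] //=; rewrite hh; congr (ops B f).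
by apply: functional_extensionality => j; exact: IH.
Qed.

Lemma eval_prod I (B : I -> alg sg) X (v : X -> prod_alg B) t i :
  eval v t i = eval (fun x => v x i) t.
Proof.
elim: t => [x|f ts IH] //=; congr (ops (B i) f).
by apply: functional_extensionality => j; exact: IH.
Qed.

Definition eqs_hold A X (v : X -> A) (l : list (term sg X * term sg X)) : Prop :=
  forall p, In p l -> eval v p.1 = eval v p.2.

Fixpoint vars X (t : term sg X) : list X :=
  match t with
  | Var x => x :: nil
  | App f ts => flat_map (fun j => vars (ts j)) (enum 'I_(arity f))
  end.

Lemma eq_eval_vars A X (v v' : X -> A) t :
  (forall x, In x (vars t) -> v x = v' x) -> eval v t = eval v' t.
Proof.
elim: t => [x|f ts IH] /= H; first by apply: H; left.
congr (ops A f); apply: functional_extensionality => j; apply: IH => x Hx.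
by apply: H; apply/in_flat_map; exists j; split=> //; apply: mem_In; rewrite mem_enum.
Qed.

Definition eqs_vars X (l : list (term sg X * term sg X)) : list X :=
  flat_map (fun p => vars p.1 ++ vars p.2) l.

Lemma vars_sub_eqs_vars X (l : list (term sg X * term sg X)) p :
  In p l -> (forall x, In x (vars p.1) -> In x (eqs_vars l)) /\
            (forall x, In x (vars p.2) -> In x (eqs_vars l)).
Proof.
by move=> Hp; split=> x Hx; apply/in_flat_map; exists p; split=> //; apply/in_app_iff; auto.
Qed.
End Terms.

Section Hypersubstitutions.
Variable sg : signature.
Implicit Types (A B : alg sg) (sigma rho : hypersubst sg).

Definition hid : hypersubst sg := fun f => @App sg _ f (fun j => Var sg j).

Definition hcomp sigma rho : hypersubst sg := fun f => hext sigma (rho f).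

Lemma hext_hid X (t : term sg X) : hext hid t = t.
Proof.
elim: t => [x|f ts IH] //=; congr (@App _ _ f).
by apply: functional_extensionality => j; exact: IH.
Qed.

Lemma hext_tsubst sigma X Y (t : term sg Y) (s : Y -> term sg X) :
  hext sigma (tsubst t s) = tsubst (hext sigma t) (fun y => hext sigma (s y)).
Proof.
elim: t => [y|f ts IH] //=; rewrite tsubst_comp; congr (tsubst _ _).
by apply: functional_extensionality => j; exact: IH.
Qed.

Lemma hext_hcomp sigma rho X (t : term sg X) :
  hext sigma (hext rho t) = hext (hcomp sigma rho) t.
Proof.
elim: t => [x|f ts IH] //=; rewrite hext_tsubst; congr (tsubst _ _).
by apply: functional_extensionality => j; exact: IH.
Qed.

Definition qholds A (q : qid sg) : Prop :=
  forall v : nat -> A, eqs_hold v (qprem q) -> eval v (qconcl q).1 = eval v (qconcl q).2.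

Definition Qclass (X : cls sg) : cls sg :=
  fun A => forall q, (forall B, X B -> qholds B q) -> qholds A q.

Definition qmap sigma (q : qid sg) : qid sg :=
  Qid (List.map (fun p => (hext sigma p.1, hext sigma p.2)) (qprem q))
      (hext sigma (qconcl q).1, hext sigma (qconcl q).2).

Lemma qmap_hid q : qmap hid q = q.
Proof.
case: q => prem [c1 c2]; rewrite /qmap /= !hext_hid; congr Qid.
by elim: prem => //= -[t1 t2] prem ->; rewrite !hext_hid.
Qed.

Lemma qmap_hcomp sigma rho q : qmap sigma (qmap rho q) = qmap (hcomp sigma rho) q.
Proof. by rewrite /qmap /= map_map !hext_hcomp; under map_ext do rewrite /= !hext_hcomp. Qed.

Lemma qholds_derived A sigma q : qholds (derived A sigma) q <-> qholds A (qmap sigma q).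
Proof.
split=> H v Hp /=.
- rewrite !eval_hext; apply: H => p Hin; rewrite -!eval_hext; apply: (Hp (_, _)).
  by apply/in_map_iff; exists p.
- rewrite -!eval_hext; apply: H => p /in_map_iff [p' [<- Hin]] /=.
  by rewrite !eval_hext; apply: Hp.
Qed.

Lemma hypersat_qmap A q : hypersat A q <-> forall sigma, qholds A (qmap sigma q).
Proof.
split=> H sigma v Hp; apply: H.
- by move=> p Hin; apply: (Hp (_, _)); apply/in_map_iff; exists p.
- by move=> p /in_map_iff [p' [<- Hin]]; apply: Hp.
Qed.

Lemma HQ_Qclass_Dop (K : cls sg) : Ceq (HQ K) (Qclass (Dop K)).
Proof.
move=> A; split=> HA q Hq.
- have HqK : forall B, K B -> hypersat B q.
    by move=> B KB; apply/hypersat_qmap => sigma; apply/qholds_derived; apply: Hq; exists B, sigma.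
  by rewrite -(qmap_hid q); apply: (proj1 (hypersat_qmap _ _) (HA q HqK)).
- apply/hypersat_qmap => sigma; apply: HA => _ [B [rho [KB ->]]].
  by apply/qholds_derived; rewrite qmap_hcomp; apply: (proj1 (hypersat_qmap _ _) (Hq B KB)).
Qed.
End Hypersubstitutions.

Section Soundness.
Variable sg : signature.
Implicit Types (A B : alg sg) (X : cls sg).
Variable q : qid sg.

Lemma qholds_embedding A B (h : A -> B) :
  is_hom h -> injectiveP h -> qholds B q -> qholds A q.
Proof.
move=> hh hi HB v Hp; apply: hi; rewrite !(hom_eval _ _ hh); apply: HB => p Hin.
by rewrite -!(hom_eval _ _ hh) (Hp p Hin).
Qed.

Lemma qholds_prod I (B : I -> alg sg) : (forall i, qholds (B i) q) -> qholds (prod_alg B) q.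
Proof.
move=> HB v Hp; apply: functional_extensionality_dep => i; rewrite !eval_prod.
by apply: HB => p Hin; rewrite -!eval_prod (Hp p Hin).
Qed.

Lemma qholds_Sop X A : (forall B, X B -> qholds B q) -> Sop X A -> qholds A q.
Proof. by move=> HX [B [XB [h [hh hi]]]]; apply: (qholds_embedding hh hi); apply: HX. Qed.

Lemma qholds_Pgen C X A : (forall B, X B -> qholds B q) -> Pgen C X A -> qholds A q.
Proof.
move=> HX [I [B [_ [XB [h [hh [hi _]]]]]]]; apply: (qholds_embedding hh hi).
by apply: qholds_prod => i; apply: HX.
Qed.

Lemma qholds_Psop X A : (forall B, X B -> qholds B q) -> Psop X A -> qholds A q.
Proof.
move=> HX [I [B [XB [h [hh [hi _]]]]]]; apply: (qholds_embedding hh hi).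
by apply: qholds_prod => i; apply: HX.
Qed.

Lemma qholds_Puop X A : (forall B, X B -> qholds B q) -> Puop X A -> qholds A q.
Proof.
move=> HX [I [B [F [UF [XB [h [hh [hs hk]]]]]]]] v Hp.
pose v' n := proj1_sig (constructive_indefinite_description _ (hs (v n))).
have ev t : eval v t = h (eval v' t).
  rewrite (hom_eval _ _ hh); congr (eval _ t); apply: functional_extensionality => n.
  by rewrite (proj2_sig (constructive_indefinite_description _ (hs (v n)))).
rewrite !ev; apply/hk.
have Fprem : F (fun i => forall p, In p (qprem q) -> eval v' p.1 i = eval v' p.2 i).
  apply: (ultrafilter_all_In (P := fun p i => eval v' p.1 i = eval v' p.2 i)) => // p Hin.
  by apply/hk; rewrite -!ev; apply: Hp.
case: UF => [_ [_ [FS _]]]; apply: (FS _ _ Fprem) => i Hi.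
by rewrite !eval_prod; apply: (HX _ (XB i)) => p Hin; rewrite -!eval_prod; exact: Hi.
Qed.

Section Limit.
Local Unset Implicit Arguments.
Variables (I : Type) (le : I -> I -> Prop) (B : I -> alg sg).
Variable h : forall i j, le i j -> B i -> B j.
Variables (A : alg sg) (g : forall i, B i -> A).
Hypothesis le_updirected : updirected_poset le.
Hypothesis h_hom : forall i j (p : le i j), is_hom (h i j p).
Hypothesis h_comp : forall i j k (p : le i j) (q : le j k) (r : le i k) x,
  h j k q (h i j p x) = h i k r x.
Hypothesis g_hom : forall i, is_hom (g i).
Hypothesis g_compat : forall i j (p : le i j) x, g j (h i j p x) = g i x.
Hypothesis g_onto : forall a, exists i x, g i x = a.
Hypothesis g_kernel : forall i x y, g i x = g i y <-> exists k (p : le i k), h i k p x = h i k p y.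

Lemma limit_lift_valuation (L : list nat) (v : nat -> A) :
  exists c (v' : nat -> B c), forall n, In n L -> g c (v' n) = v n.
Proof.
case: le_updirected => [_ [_ [_ [[i0] dir]]]].
elim: L => [|n L [c [v' Hv']]].
  by case: (car_inh (B i0)) => b; exists i0, (fun _ => b).
have [i [x Hx]] := g_onto (v n); have [d [id cd]] := dir i c.
exists d, (fun m => if m == n then h i d id x else h c d cd (v' m)) => m Hm.
case: eqP => [->|ne]; first by rewrite g_compat.
by rewrite g_compat; apply: Hv'; case: Hm => // E; case: ne.
Qed.

Lemma limit_equalize c (l : list (B c * B c)) :
  (forall x, In x l -> g c x.1 = g c x.2) ->
  exists d (p : le c d), forall x, In x l -> h c d p x.1 = h c d p x.2.
Proof.
case: le_updirected => [refl [_ [trans [_ dir]]]].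
have later k e (pk : le c k) (pe : le c e) x y :
    le k e -> h c k pk x = h c k pk y -> h c e pe x = h c e pe y.
  by move=> ke E; rewrite -(h_comp _ _ _ pk ke pe) E (h_comp _ _ _ pk ke pe).
elim: l => [|a l IH] Hl; first by exists c, (refl c).
have [d [pd Hd]] := IH (fun x Hx => Hl x (or_intror Hx)).
have [k [pk Hk]] := proj1 (g_kernel _ _ _) (Hl a (or_introl erefl)).
have [e [ke de]] := dir k d.
exists e, (trans _ _ _ pd de) => x [<-|Hx]; first exact: later Hk.
by apply: (later _ _ pd) => //; apply: Hd.
Qed.

Lemma qholds_limit : (forall i, qholds (B i) q) -> qholds A q.
Proof.
move=> HB v Hp.
pose L := eqs_vars (qconcl q :: qprem q).
have inL p : In p (qconcl q :: qprem q) ->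
    (forall n, In n (vars p.1) -> In n L) /\ (forall n, In n (vars p.2) -> In n L).
  exact: vars_sub_eqs_vars.
have [c [v' Hv']] := limit_lift_valuation L v.
have ev t : (forall n, In n (vars t) -> In n L) -> eval v t = g c (eval v' t).
  move=> Ht; rewrite (hom_eval _ _ (g_hom c)); apply: eq_eval_vars => n Hn.
  by rewrite Hv' //; apply: Ht.
pose l := List.map (fun p => (eval v' p.1, eval v' p.2)) (qprem q).
have Hl : forall x, In x l -> g c x.1 = g c x.2.
  move=> _ /in_map_iff [p [<- Hin]] /=; have [H1 H2] := inL p (or_intror Hin).
  by rewrite -(ev _ H1) -(ev _ H2); apply: Hp.
have [d [pd Hd]] := limit_equalize c l Hl.
have [Hc1 Hc2] := inL _ (or_introl erefl).
rewrite (ev _ Hc1) (ev _ Hc2).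
rewrite -(g_compat _ _ pd (eval v' _)) -(g_compat _ _ pd (eval v' (qconcl q).2)).
congr (g d); rewrite !(hom_eval _ _ (h_hom _ _ pd)); apply: HB => p Hin.
rewrite -!(hom_eval _ _ (h_hom _ _ pd)); apply: (Hd (_, _)).
by apply/in_map_iff; exists p.
Qed.
End Limit.

Lemma qholds_Lsop X A : (forall B, X B -> qholds B q) -> Lsop X A -> qholds A q.
Proof.
move=> HX [I [le [B [h [Hle [XB [hh [_ [hc [g [gh [gc [gs gk]]]]]]]]]]]]].
apply: (qholds_limit _ _ _ h _ g Hle _ hc gh gc gs gk).
  by move=> i j p; case: (hh i j p).
by move=> i; apply: HX.
Qed.
End Soundness.

Fixpoint index_of (T : Type) (x : T) (l : list T) : nat :=
  match l with
  | nil => 0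
  | y :: l' => if excluded_middle_informative (x = y) then 0 else (index_of x l').+1
  end.

Lemma nth_error_index_of T (x : T) l : In x l -> nth_error l (index_of x l) = Some x.
Proof.
elim: l => [|y l IH] //= H; case: excluded_middle_informative => [E|ne] /=; first by rewrite E.
by apply: IH; case: H => // E; case: ne.
Qed.

(* Only finitely many variables occur, so renaming them into [nat] turns the
   implication into a quasi-identity. *)
Lemma Qclass_implication sg (X : cls sg) (A : alg sg) (V : Type)
    (prem : list (term sg V * term sg V)) (c : term sg V * term sg V) :
  Qclass X A ->
  (forall B, X B -> forall w : V -> B, eqs_hold w prem -> eval w c.1 = eval w c.2) ->
  forall w : V -> A, eqs_hold w prem -> eval w c.1 = eval w c.2.
Proof.
move=> HA HX w Hw.
pose L := eqs_vars (c :: prem).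
have inL p : In p (c :: prem) ->
    (forall x, In x (vars p.1) -> In x L) /\ (forall x, In x (vars p.2) -> In x L).
  exact: vars_sub_eqs_vars.
pose rename (t : term sg V) := tsubst t (fun x => Var sg (index_of x L)).
have eval_rename (B : alg sg) (v : nat -> B) t :
    eval v (rename t) = eval (fun x => v (index_of x L)) t.
  exact: eval_tsubst.
pose q := Qid (List.map (fun p => (rename p.1, rename p.2)) prem) (rename c.1, rename c.2).
have Xq : forall B, X B -> qholds B q.
  move=> B XB v Hv /=; rewrite !eval_rename; apply: HX => // p Hp.
  have := Hv (rename p.1, rename p.2); rewrite !eval_rename; apply.
  by apply/in_map_iff; exists p.
case: (car_inh A) => a0.
pose w' n := if nth_error L n is Some x then w x else a0.
have eval_w' t : (forall x, In x (vars t) -> In x L) -> eval w' (rename t) = eval w t.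
  move=> Ht; rewrite eval_rename; apply: eq_eval_vars => x Hx.
  by rewrite /w' nth_error_index_of //; apply: Ht.
have [Hc1 Hc2] := inL c (or_introl erefl).
rewrite -(eval_w' _ Hc1) -(eval_w' _ Hc2); apply: (HA q Xq) => _ /in_map_iff [p [<- Hp]] /=.
have [H1 H2] := inL p (or_intror Hp).
by rewrite (eval_w' _ H1) (eval_w' _ H2); apply: Hw.
Qed.

Section Quotient.
Variable sg : signature.
Variable T : alg sg.
Variable R : T -> T -> Prop.
Hypothesis R_refl : forall x, R x x.
Hypothesis R_sym : forall x y, R x y -> R y x.
Hypothesis R_trans : forall x y z, R x y -> R y z -> R x z.
Hypothesis R_compat : forall (f : sg) (xs ys : 'I_(arity f) -> T),
  (forall k, R (xs k) (ys k)) -> R (ops T f xs) (ops T f ys).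

Definition quot_car := {P : T -> Prop | exists x, P = R x}.
Definition quot_cls (x : T) : quot_car := exist _ (R x) (ex_intro _ x erefl).

Lemma quot_cls_eq x y : quot_cls x = quot_cls y <-> R x y.
Proof.
split.
- by move=> /(f_equal (@proj1_sig _ _)) /= E; rewrite E.
- move=> Rxy; apply: eq_sig_hprop => /=; first by move=> ? ? ?; apply: proof_irrelevance.
  apply: functional_extensionality => z; apply: propositional_extensionality.
  by split=> H; [apply: R_trans (R_sym Rxy) H | apply: R_trans Rxy H].
Qed.

Lemma quot_cls_onto (c : quot_car) : exists x, quot_cls x = c.
Proof.
case: c => P [x Px]; exists x; apply: eq_sig_hprop => /=; last by rewrite Px.
by move=> ? ? ?; apply: proof_irrelevance.
Qed.

Definition quot_rep (c : quot_car) : T :=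
  proj1_sig (constructive_indefinite_description _ (quot_cls_onto c)).

Lemma quot_repK c : quot_cls (quot_rep c) = c.
Proof. exact: (proj2_sig (constructive_indefinite_description _ (quot_cls_onto c))). Qed.

Lemma quot_rep_cls x : R (quot_rep (quot_cls x)) x.
Proof. by apply/quot_cls_eq; rewrite quot_repK. Qed.

Definition quot_alg : alg sg :=
  @Alg sg quot_car (let: inhabits x := car_inh T in inhabits (quot_cls x))
    (fun f args => quot_cls (ops T f (fun k => quot_rep (args k)))).

Lemma quot_cls_hom : is_hom (B := quot_alg) quot_cls.
Proof.
move=> f args /=; apply/quot_cls_eq; apply: R_compat => k.
by apply: R_sym; apply: quot_rep_cls.
Qed.

Lemma quot_cls_surj : surjectiveP (quot_cls : T -> quot_alg).
Proof. exact: quot_cls_onto. Qed.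
End Quotient.

Section Ultraproduct.
Variables (sg : signature) (I : Type) (C : I -> alg sg) (F : (I -> Prop) -> Prop).
Hypothesis F_ultra : ultrafilter F.

Definition ueq (x y : prod_alg C) : Prop := F (fun i => x i = y i).

Lemma ueq_refl x : ueq x x.
Proof. by case: F_ultra => [FT [_ [FS _]]]; apply: (FS _ _ FT). Qed.

Lemma ueq_sym x y : ueq x y -> ueq y x.
Proof. by case: F_ultra => [_ [_ [FS _]]] H; apply: (FS _ _ H). Qed.

Lemma ueq_trans x y z : ueq x y -> ueq y z -> ueq x z.
Proof.
case: F_ultra => [_ [_ [FS [FI _]]]] H1 H2.
by apply: (FS _ _ (FI _ _ H1 H2)) => i [-> ->].
Qed.

Lemma ueq_compat (f : sg) (xs ys : 'I_(arity f) -> prod_alg C) :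
  (forall k, ueq (xs k) (ys k)) -> ueq (ops (prod_alg C) f xs) (ops (prod_alg C) f ys).
Proof.
move=> H; case: (F_ultra) => [_ [_ [FS _]]].
have Fall := ultrafilter_all_In (l := enum 'I_(arity f))
  (P := fun k i => xs k i = ys k i) F_ultra (fun k _ => H k).
apply: (FS _ _ Fall) => i Hi /=; congr (ops (C i) f); apply: functional_extensionality => k.
by apply: Hi; apply: mem_In; rewrite mem_enum.
Qed.

Definition ultraproduct : alg sg := quot_alg ueq.

Definition ultra_cls : prod_alg C -> ultraproduct := quot_cls ueq.

Lemma ultra_cls_hom : is_hom ultra_cls.
Proof. exact: (quot_cls_hom ueq_refl ueq_sym ueq_trans ueq_compat). Qed.

Lemma ultra_cls_eq x y : ultra_cls x = ultra_cls y <-> ueq x y.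
Proof. exact: (quot_cls_eq ueq_refl ueq_sym ueq_trans). Qed.

Lemma Puop_ultraproduct (X : cls sg) : (forall i, X (C i)) -> Puop X ultraproduct.
Proof.
move=> XC; exists I, C, F; split=> //; split=> //; exists ultra_cls.
split; first exact: ultra_cls_hom.
by split; [exact: quot_cls_surj | exact: ultra_cls_eq].
Qed.
End Ultraproduct.

Lemma hom_into_ultraproduct sg (X : cls sg) (A : alg sg) (J : Type) (le : J -> J -> Prop)
    (C : J -> alg sg) (w : forall j, A -> C j) (S : A -> A -> Prop) :
  updirected_preorder le -> (forall j, X (C j)) ->
  (forall (f : sg) args, exists j0, forall k, le j0 k ->
     w k (ops A f args) = ops (C k) f (fun i => w k (args i))) ->
  (forall a b, S a b -> exists j0, forall k, le j0 k -> w k a <> w k b) ->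
  exists (U : alg sg) (phi : A -> U),
    Puop X U /\ is_hom phi /\ forall a b, S a b -> phi a <> phi b.
Proof.
move=> le_dir XC w_hom w_sep.
have [F [UF cone]] := ultrafilter_refining_directed le_dir.
have UF' := UF; case: UF' => [_ [Fn [FS [FI _]]]].
exists (ultraproduct C F), (fun a => ultra_cls F (fun j => w j a)).
split; first exact: Puop_ultraproduct.
split.
- move=> f args; rewrite -(ultra_cls_hom UF); apply/(ultra_cls_eq UF).
  have [j0 Hj0] := w_hom f args.
  by apply: (FS _ _ (cone j0)) => k /Hj0 ->.
- move=> a b Sab /(ultra_cls_eq UF) E; have [j0 Hj0] := w_sep a b Sab.
  by apply: Fn; apply: (FS _ _ (FI _ _ E (cone j0))) => k [E1 /Hj0].
Qed.

Lemma Pgen_prod_alg sg (C : Type -> Prop) (Y : cls sg) I (B : I -> alg sg) :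
  C I -> (forall i, Y (B i)) -> Pgen C Y (prod_alg B).
Proof.
move=> CI YB; exists I, B; split=> //; split=> //.
by exists id; split; [|split; [|move=> y; exists y]].
Qed.

Lemma Sop_Pop_of_separating sg (Y : cls sg) (A : alg sg) :
  (forall a b : A, a <> b ->
     exists (U : alg sg) (phi : A -> U), Y U /\ is_hom phi /\ phi a <> phi b) ->
  Sop (Pop Y) A.
Proof.
move=> Hsep; pose Pairs := {ab : A * A | ab.1 <> ab.2}.
have Hs (ab : Pairs) : exists s : {U : alg sg & A -> U},
    Y (projT1 s) /\ is_hom (projT2 s) /\ projT2 s (sval ab).1 <> projT2 s (sval ab).2.
  by case: ab => [[a b] /= ne]; have [U [phi H]] := Hsep a b ne; exists (existT _ U phi).
pose s ab := proj1_sig (constructive_indefinite_description _ (Hs ab)).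
have sP ab : Y (projT1 (s ab)) /\ is_hom (projT2 (s ab)) /\
    projT2 (s ab) (sval ab).1 <> projT2 (s ab) (sval ab).2.
  exact: (proj2_sig (constructive_indefinite_description _ (Hs ab))).
exists (prod_alg (fun ab => projT1 (s ab))); split.
  by apply: Pgen_prod_alg => // ab; case: (sP ab).
exists (fun a ab => projT2 (s ab) a); split.
  move=> f args; apply: functional_extensionality_dep => ab.
  by case: (sP ab) => _ [-> _].
move=> a b E; apply: NNPP => ne.
have := f_equal (fun x => x (exist _ (a, b) ne : Pairs)) E.
by case: (sP (exist _ (a, b) ne)) => _ [_]; apply.
Qed.

Lemma finite_In_sig (T : Type) (l : list T) : finite_type {x : T | In x l}.
Proof.
elim: l => [|a l [L HL]]; first by exists nil => -[x []].
pose lift (y : {x | In x l}) : {x | In x (a :: l)} :=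
  exist _ (sval y) (or_intror (proj2_sig y)).
exists (exist _ a (or_introl erefl) :: List.map lift L) => -[x [ax|xl]].
  by left; subst x; apply: eq_sig_hprop => // ? ? ?; apply: proof_irrelevance.
right; apply/in_map_iff; exists (exist _ x xl); split; last exact: HL.
by apply: eq_sig_hprop => // ? ? ?; apply: proof_irrelevance.
Qed.

Definition list_incl (T : Type) (l l' : list T) : Prop := forall x, In x l -> In x l'.

Lemma list_incl_updirected (T : Type) : updirected_preorder (@list_incl T).
Proof.
split; first by constructor; exact: nil.
split; first by move=> l.
split; first by move=> l1 l2 l3 H1 H2 x /H1 /H2.
by move=> l1 l2; exists (l1 ++ l2); split=> x Hx; apply/in_app_iff; auto.
Qed.

Lemma updirected_preorder_prod (J1 J2 : Type) (le1 : J1 -> J1 -> Prop) (le2 : J2 -> J2 -> Prop) :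
  updirected_preorder le1 -> updirected_preorder le2 ->
  updirected_preorder (fun x y => le1 x.1 y.1 /\ le2 x.2 y.2).
Proof.
move=> [[j1] [r1 [t1 d1]]] [[j2] [r2 [t2 d2]]].
split; first by constructor; exact: (j1, j2).
split; first by move=> x; split.
split; first by move=> x y z [H1 H2] [H3 H4]; split; [exact: t1 H1 H3 | exact: t2 H2 H4].
move=> [x1 x2] [y1 y2]; have [z1 [H1 H2]] := d1 x1 y1; have [z2 [H3 H4]] := d2 x2 y2.
by exists (z1, z2).
Qed.

Section Completeness.
Variables (sg : signature) (X : cls sg) (A : alg sg).
Hypothesis A_Q : Qclass X A.

Definition valid_eq (p : term sg A * term sg A) : Prop :=
  eval (fun x : A => x) p.1 = eval (fun x : A => x) p.2.

Definition fin_diag := {l : list (term sg A * term sg A) | forall p, In p l -> valid_eq p}.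

Definition diag_le (j k : fin_diag) : Prop := list_incl (sval j) (sval k).

Lemma diag_le_updirected : updirected_preorder diag_le.
Proof.
have [_ [refl [trans dir]]] := list_incl_updirected (term sg A * term sg A).
split; first by constructor; exists nil.
split; first by move=> j; exact: refl.
split; first by move=> i j k; exact: trans.
move=> [l1 H1] [l2 H2].
have H p : In p (l1 ++ l2) -> valid_eq p by move=> /in_app_iff [/H1|/H2].
by exists (exist _ _ H); split=> p Hp /=; apply/in_app_iff; auto.
Qed.

Definition distinct_pair := {ab : A * A | ab.1 <> ab.2}.

Lemma diag_separation (j : fin_diag) (ab : distinct_pair) :
  exists s : {B : alg sg & A -> B}, X (projT1 s) /\ eqs_hold (projT2 s) (sval j) /\
    projT2 s (sval ab).1 <> projT2 s (sval ab).2.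
Proof.
case: ab => [[a b] /= ne]; apply: NNPP => H; apply: ne.
apply: (@Qclass_implication sg X A A (sval j) (Var sg a, Var sg b) A_Q _ (fun x => x)).
- move=> B XB w Hw /=; apply: NNPP => nw; apply: H; by exists (existT _ B w).
- by move=> p /(proj2_sig j).
Qed.

Definition separator j ab :=
  proj1_sig (constructive_indefinite_description _ (diag_separation j ab)).
Definition sep_alg j ab : alg sg := projT1 (separator j ab).
Definition sep_map j ab : A -> sep_alg j ab := projT2 (separator j ab).

Lemma separatorP j ab : X (sep_alg j ab) /\ eqs_hold (sep_map j ab) (sval j) /\
  sep_map j ab (sval ab).1 <> sep_map j ab (sval ab).2.
Proof. exact: (proj2_sig (constructive_indefinite_description _ (diag_separation j ab))). Qed.

Lemma diag_hom (f : sg) (args : 'I_(arity f) -> A) :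
  exists j0 : fin_diag, forall k (B : alg sg) (w : A -> B), diag_le j0 k ->
    eqs_hold w (sval k) -> w (ops A f args) = ops B f (fun i => w (args i)).
Proof.
pose p := (App (f := f) (fun i => Var sg (args i)), Var sg (ops A f args)).
have Hp : forall p', In p' (p :: nil) -> valid_eq p' by move=> p' [<-|[]].
exists (exist _ _ Hp) => k B w Hk Hw.
by have := Hw p (Hk p (or_introl erefl)); rewrite /p /= => <-.
Qed.

Lemma Qclass_SPPu : Sop (Pop (Puop X)) A.
Proof.
apply: Sop_Pop_of_separating => a b ne.
pose ab : distinct_pair := exist _ (a, b) ne.
have w_hom f args : exists j0, forall k, diag_le j0 k ->
    sep_map k ab (ops A f args) = ops (sep_alg k ab) f (fun i => sep_map k ab (args i)).
  have [j0 Hj0] := diag_hom args; exists j0 => k Hk.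
  by case: (separatorP k ab) => _ [Hs _]; exact: Hj0 Hk Hs.
have w_sep x y : x = a /\ y = b ->
    exists j0, forall k, diag_le j0 k -> sep_map k ab x <> sep_map k ab y.
  move=> [-> ->]; case: diag_le_updirected => [[j0] _]; exists j0 => k _.
  by case: (separatorP k ab) => _ [].
have [U [phi [PU [hphi sep]]]] := hom_into_ultraproduct (S := fun x y => x = a /\ y = b)
  diag_le_updirected (fun j => proj1 (separatorP j ab)) w_hom w_sep.
by exists U, phi; split=> //; split=> //; exact: sep.
Qed.

Definition fin_pairs (N : list distinct_pair) := {ab : distinct_pair | In ab N}.

Definition fin_sep_alg (x : fin_diag * list distinct_pair) : alg sg :=
  prod_alg (fun n : fin_pairs x.2 => sep_alg x.1 (sval n)).

Definition fin_sep_map (x : fin_diag * list distinct_pair) (a : A) : fin_sep_alg x :=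
  fun n => sep_map x.1 (sval n) a.

Lemma Qclass_SPuPw : Sop (Puop (Pwop X)) A.
Proof.
pose le (x y : fin_diag * list distinct_pair) := diag_le x.1 y.1 /\ list_incl x.2 y.2.
have le_dir : updirected_preorder le.
  exact: updirected_preorder_prod diag_le_updirected (@list_incl_updirected _).
have XC x : Pwop X (fin_sep_alg x).
  by apply: Pgen_prod_alg; [exact: finite_In_sig | move=> n; case: (separatorP x.1 (sval n))].
have w_hom f args : exists j0, forall k, le j0 k ->
    @fin_sep_map k (ops A f args) = ops (fin_sep_alg k) f (fun i => @fin_sep_map k (args i)).
  have [j0 Hj0] := diag_hom args; exists (j0, nil) => -[k N] [Hk _].
  apply: functional_extensionality_dep => n.
  by case: (separatorP k (sval n)) => _ [Hs _]; exact: Hj0 Hk Hs.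
have w_sep a b : a <> b -> exists j0, forall k, le j0 k -> @fin_sep_map k a <> @fin_sep_map k b.
  move=> ne; pose ab : distinct_pair := exist _ (a, b) ne.
  case: (diag_le_updirected) => [[j0] _]; exists (j0, ab :: nil) => -[k N] [_ HN] E.
  have := f_equal (fun x => x (exist _ ab (HN _ (or_introl erefl)) : fin_pairs N)) E.
  by case: (separatorP k ab) => _ [].
have [U [phi [PU [hphi sep]]]] := hom_into_ultraproduct le_dir XC w_hom w_sep.
exists U; split=> //; exists phi; split=> //.
by move=> a b E; apply: NNPP => ne; exact: sep a b ne E.
Qed.
End Completeness.

Section Image.
Variables (sg : signature) (A B : alg sg) (h : A -> B).
Hypothesis h_hom : is_hom h.

Definition image_car := {b : B | exists a, h a = b}.

Lemma image_closed (f : sg) (args : 'I_(arity f) -> image_car) :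
  exists a, h a = ops B f (fun k => sval (args k)).
Proof.
pose pre k := proj1_sig (constructive_indefinite_description _ (proj2_sig (args k))).
exists (ops A f pre); rewrite h_hom; congr (ops B f); apply: functional_extensionality => k.
exact: (proj2_sig (constructive_indefinite_description _ (proj2_sig (args k)))).
Qed.

Definition image_alg : alg sg :=
  @Alg sg image_car
    (let: inhabits a := car_inh A in inhabits (exist _ (h a) (ex_intro _ a erefl)))
    (fun f args => exist _ _ (image_closed args)).

Definition corestr (a : A) : image_alg := exist _ (h a) (ex_intro _ a erefl).

Lemma image_incl_hom : is_hom (A := image_alg) (@sval _ _).
Proof. by []. Qed.

Lemma image_incl_inj : injectiveP (@sval _ (fun b => exists a, h a = b) : image_alg -> B).
Proof. by move=> x y E; apply: eq_sig_hprop => // ? ? ?; apply: proof_irrelevance. Qed.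

Lemma corestr_hom : is_hom corestr.
Proof. by move=> f args; apply: image_incl_inj; rewrite /= h_hom. Qed.

Lemma corestr_surj : surjectiveP corestr.
Proof. by move=> [b [a Hab]]; exists a; apply: image_incl_inj. Qed.
End Image.

Lemma Psop_Sop_of_embedding sg (X : cls sg) (D : alg sg) I (C : I -> alg sg)
    (e : D -> prod_alg C) :
  (forall i, X (C i)) -> is_hom e -> injectiveP e -> Psop (Sop X) D.
Proof.
move=> XC eh ei.
have eih i : is_hom (fun d => e d i) by move=> f args; rewrite eh.
exists I, (fun i => image_alg (eih i)); split.
  move=> i; exists (C i); split=> //; exists (@sval _ _).
  by split; [exact: image_incl_hom | exact: image_incl_inj].
exists (fun d i => corestr (eih i) d); split.
  by move=> f args; apply: functional_extensionality_dep => i; rewrite corestr_hom.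
split; last by move=> i; exact: corestr_surj.
move=> x y E; apply: ei; apply: functional_extensionality_dep => i.
exact: (f_equal (@sval _ _) (f_equal (fun z => z i) E)).
Qed.

Section Spectrum.
Variables (sg : signature) (X : cls sg) (A : alg sg).
Hypothesis A_Q : Qclass X A.

Definition term_alg : alg sg :=
  @Alg sg (term sg A) (let: inhabits a := car_inh A in inhabits (Var sg a))
    (fun f ts => App ts).

Definition fin_valid := {P : term sg A * term sg A -> Prop |
  (exists l, forall p, P p <-> In p l) /\ forall p, P p -> valid_eq p}.

Definition valid_le (P Q : fin_valid) : Prop := forall p, sval P p -> sval Q p.

Lemma valid_le_updirected : updirected_poset valid_le.
Proof.
split; first by move=> P p.
split.
  move=> [P HP] [Q HQ] /= PQ QP; apply: eq_sig_hprop => /=.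
    by move=> ? ? ?; apply: proof_irrelevance.
  apply: functional_extensionality => p; apply: propositional_extensionality.
  by split; [exact: PQ | exact: QP].
split; first by move=> P Q R PQ QR p /PQ /QR.
split; first by constructor; exists (fun _ => False); split; [exists nil | ].
move=> [P [[l1 H1] V1]] [Q [[l2 H2] V2]].
have HPQ : (exists l, forall p, (P p \/ Q p) <-> In p l) /\ forall p, P p \/ Q p -> valid_eq p.
  split; last by move=> p [/V1|/V2].
  by exists (l1 ++ l2) => p; rewrite in_app_iff -H1 -H2.
by exists (exist _ (fun p => P p \/ Q p) HPQ); split=> p /=; auto.
Qed.

Definition forced (P : fin_valid) (s t : term_alg) : Prop :=
  forall B, X B -> forall w : A -> B,
    (forall p, sval P p -> eval w p.1 = eval w p.2) -> eval w s = eval w t.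

Lemma forced_refl P s : forced P s s. Proof. by []. Qed.

Lemma forced_sym P s t : forced P s t -> forced P t s.
Proof. by move=> H B XB w Hw; rewrite (H B XB w Hw). Qed.

Lemma forced_trans P s t u : forced P s t -> forced P t u -> forced P s u.
Proof. by move=> H1 H2 B XB w Hw; rewrite (H1 B XB w Hw) (H2 B XB w Hw). Qed.

Lemma forced_compat P (f : sg) (ss ts : 'I_(arity f) -> term_alg) :
  (forall k, forced P (ss k) (ts k)) -> forced P (ops term_alg f ss) (ops term_alg f ts).
Proof.
move=> H B XB w Hw /=; congr (ops B f); apply: functional_extensionality => k.
exact: H.
Qed.

Lemma forced_le P Q s t : valid_le P Q -> forced P s t -> forced Q s t.
Proof. by move=> PQ H B XB w Hw; apply: H => // p /PQ /Hw. Qed.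

Lemma forced_valid P s t : forced P s t -> valid_eq (s, t).
Proof.
case: P => P [[l Hl] HV] /= H.
apply: (@Qclass_implication sg X A A l (s, t) A_Q) => /=.
- by move=> B XB w Hw; apply: H => // p /Hl; exact: Hw.
- by move=> p /Hl /HV.
Qed.

Definition presented (P : fin_valid) : alg sg := quot_alg (forced P).
Definition pcls (P : fin_valid) : term_alg -> presented P := quot_cls (forced P).
Definition prep (P : fin_valid) : presented P -> term_alg := @quot_rep _ _ (forced P).

Lemma pcls_eq P s t : pcls P s = pcls P t <-> forced P s t.
Proof. exact: (quot_cls_eq (@forced_refl P) (@forced_sym P) (@forced_trans P)). Qed.

Lemma prepK P x : pcls P (prep x) = x.
Proof. exact: quot_repK. Qed.

Lemma prep_pcls P t : forced P (prep (pcls P t)) t.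
Proof. exact: (quot_rep_cls (@forced_refl P) (@forced_sym P) (@forced_trans P)). Qed.

Lemma pcls_hom P : is_hom (pcls P).
Proof.
exact: (quot_cls_hom (@forced_refl P) (@forced_sym P) (@forced_trans P) (@forced_compat P)).
Qed.

Lemma presented_ops P (f : sg) (args : 'I_(arity f) -> presented P) :
  ops (presented P) f args = pcls P (App (fun k => prep (args k))).
Proof. by []. Qed.

Definition presented_map (P Q : fin_valid) (_ : valid_le P Q) (x : presented P) : presented Q :=
  pcls Q (prep x).

Definition presented_eval (P : fin_valid) (x : presented P) : A := eval (fun a => a) (prep x).

Lemma presented_map_pcls P Q (pq : valid_le P Q) t : presented_map pq (pcls P t) = pcls Q t.
Proof. by apply/pcls_eq; apply: (forced_le pq); apply: prep_pcls. Qed.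

Lemma presented_eval_pcls P t : presented_eval (pcls P t) = eval (fun a => a) t.
Proof. exact: forced_valid (prep_pcls t). Qed.

Lemma presented_eval_hom P : is_hom (@presented_eval P).
Proof.
by move=> f args; rewrite presented_ops presented_eval_pcls.
Qed.

Lemma presented_eval_kernel P (x y : presented P) :
  presented_eval x = presented_eval y <->
  exists Q (pq : valid_le P Q), presented_map pq x = presented_map pq y.
Proof.
split; last first.
  move=> [Q [pq E]]; have := f_equal (@presented_eval Q) E.
  by rewrite /presented_map !presented_eval_pcls.
move=> E; case: (svalP P) => [[l Hl] HV].
pose Q p := sval P p \/ p = (prep x, prep y).
have HQ : (exists l, forall p, Q p <-> In p l) /\ forall p, Q p -> valid_eq p.
  split; last by move=> p [/HV|->].
  by exists ((prep x, prep y) :: l) => p; rewrite /Q Hl /=; split; case; auto.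
exists (exist _ Q HQ), (fun p Hp => or_introl Hp).
by apply/pcls_eq => B XB w Hw; apply: (Hw (prep x, prep y)); right.
Qed.

Lemma Lsop_presented (Y : cls sg) : (forall P, Y (presented P)) -> Lsop Y A.
Proof.
move=> YP; exists fin_valid, valid_le, presented, presented_map.
split; first exact: valid_le_updirected.
split=> //.
split.
  move=> P Q pq; split.
    by move=> f args; rewrite presented_ops presented_map_pcls pcls_hom.
  by move=> y; exists (pcls P (prep y)); rewrite presented_map_pcls prepK.
split; first by move=> P pp x; rewrite /presented_map prepK.
split; first by move=> P Q R pq qr pr x; rewrite -(prepK x) !presented_map_pcls.
exists presented_eval; split; first exact: presented_eval_hom.
split; first by move=> P Q pq x; rewrite -(prepK x) presented_map_pcls !presented_eval_pcls.
split; last exact: presented_eval_kernel.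
move=> a; case: valid_le_updirected => _ [_ [_ [[P] _]]].
by exists P, (pcls P (Var sg a)); rewrite presented_eval_pcls.
Qed.

Lemma forced_separation P (st : term_alg * term_alg) : ~ forced P st.1 st.2 ->
  exists s : {B : alg sg & A -> B}, X (projT1 s) /\
    (forall p, sval P p -> eval (projT2 s) p.1 = eval (projT2 s) p.2) /\
    eval (projT2 s) st.1 <> eval (projT2 s) st.2.
Proof.
move=> nf; apply: NNPP => H; apply: nf => B XB w Hw; apply: NNPP => ne; apply: H.
by exists (existT _ B w).
Qed.

Lemma presented_embedding P : exists (I : Type) (C : I -> alg sg), (forall i, X (C i)) /\
  exists e : presented P -> prod_alg C, is_hom e /\ injectiveP e.
Proof.
pose I := {st : term_alg * term_alg | ~ forced P st.1 st.2}.
pose s (n : I) := proj1_sig (constructive_indefinite_description _ (forced_separation (svalP n))).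
have sP (n : I) := proj2_sig (constructive_indefinite_description _ (forced_separation (svalP n))).
have eval_prep n t : eval (projT2 (s n)) (prep (pcls P t)) = eval (projT2 (s n)) t.
  by have [XB [Hw _]] := sP n; exact: (@prep_pcls P t _ XB _ Hw).
exists I, (fun n => projT1 (s n)); split; first by move=> n; case: (sP n).
exists (fun x n => eval (projT2 (s n)) (prep x)); split.
  by move=> f args; apply: functional_extensionality_dep => n; rewrite presented_ops eval_prep.
move=> x y E; rewrite -(prepK x) -(prepK y); apply/pcls_eq; apply: NNPP => nf.
have := f_equal (fun z => z (exist _ (prep x, prep y) nf : I)) E.
by case: (sP (exist _ (prep x, prep y) nf)) => _ [_].
Qed.

Lemma Qclass_LsSP : Lsop (Sop (Pop X)) A.
Proof.
apply: Lsop_presented => P; have [I [C [XC [e [eh ei]]]]] := presented_embedding P.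
by exists (prod_alg C); split; [exact: Pgen_prod_alg | exists e].
Qed.

Lemma Qclass_LsPsS : Lsop (Psop (Sop X)) A.
Proof.
apply: Lsop_presented => P; have [I [C [XC [e [eh ei]]]]] := presented_embedding P.
exact: Psop_Sop_of_embedding XC eh ei.
Qed.
End Spectrum.


Section UltraproductLimit.
Variables (sg : signature) (I : Type) (C : I -> alg sg) (F : (I -> Prop) -> Prop).
Hypothesis F_ultra : ultrafilter F.
Variables (U : alg sg) (hU : prod_alg C -> U).
Hypothesis hU_hom : is_hom hU.
Hypothesis hU_surj : surjectiveP hU.
Hypothesis hU_kernel : forall x y, hU x = hU y <-> F (fun i => x i = y i).
Variable c0 : prod_alg C.

Definition large := {Z : I -> Prop | F Z}.
Definition large_le (Z Y : large) : Prop := forall i, sval Y i -> sval Z i.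
Definition restr_alg (Z : large) : alg sg := prod_alg (fun i : {i | sval Z i} => C (sval i)).
Definition restr (Z Y : large) (p : large_le Z Y) (x : restr_alg Z) : restr_alg Y :=
  fun i => x (exist _ (sval i) (p _ (proj2_sig i))).

(* The values outside [Z] are irrelevant modulo [F]; [c0] fills them. *)
Definition extend (Z : large) (x : restr_alg Z) : prod_alg C := fun i =>
  if excluded_middle_informative (sval Z i) is left H then x (exist _ i H) else c0 i.

Definition restr_limit (Z : large) (x : restr_alg Z) : U := hU (extend x).

Lemma extend_in Z (x : restr_alg Z) i (H : sval Z i) : extend x i = x (exist _ i H).
Proof.
rewrite /extend; case: excluded_middle_informative => [H'|]; last by [].
by rewrite (proof_irrelevance _ H' H).
Qed.

Lemma restr_limit_eq Z Y (x : restr_alg Z) (y : restr_alg Y) :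
  (forall i (HZ : sval Z i) (HY : sval Y i), x (exist _ i HZ) = y (exist _ i HY)) ->
  restr_limit x = restr_limit y.
Proof.
case: F_ultra => [_ [_ [FS [FI _]]]] Exy; apply/hU_kernel.
apply: (FS _ _ (FI _ _ (svalP Z) (svalP Y))) => i [HZ HY].
by rewrite (extend_in _ HZ) (extend_in _ HY); apply: Exy.
Qed.

Lemma large_le_updirected : updirected_poset large_le.
Proof.
case: F_ultra => [FT [_ [_ [FI _]]]].
split; first by move=> Z i.
split.
  move=> [Z HZ] [Y HY] /= ZY YZ; apply: eq_sig_hprop => /=.
    by move=> ? ? ?; apply: proof_irrelevance.
  apply: functional_extensionality => i; apply: propositional_extensionality.
  by split; [exact: YZ | exact: ZY].
split; first by move=> Z Y W ZY YW i /YW /ZY.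
split; first by constructor; exists (fun _ => True).
move=> [Z HZ] [Y HY]; exists (exist _ (fun i => Z i /\ Y i) (FI _ _ HZ HY)).
by split=> i /= [].
Qed.

Lemma restr_surj Z Y (p : large_le Z Y) : surjectiveP (restr p).
Proof.
move=> y; exists (fun i => if excluded_middle_informative (sval Y (sval i)) is left H
                         then y (exist _ (sval i) H) else c0 (sval i)).
apply: functional_extensionality_dep => -[i Hi]; rewrite /restr /=.
by case: excluded_middle_informative => [H|[]] //; rewrite (proof_irrelevance _ H Hi).
Qed.

Lemma restr_limit_hom Z : is_hom (@restr_limit Z).
Proof.
move=> f args; rewrite /restr_limit -hU_hom; apply/hU_kernel.
case: F_ultra => [_ [_ [FS _]]]; apply: (FS _ _ (svalP Z)) => i HZ /=.
rewrite (extend_in _ HZ) /=; congr (ops _ f); apply: functional_extensionality => j.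
by rewrite (extend_in _ HZ).
Qed.

Lemma restr_limit_onto u : exists Z (x : restr_alg Z), restr_limit x = u.
Proof.
have [c <-] := hU_surj u; case: F_ultra => [FT _].
pose Z0 : large := exist _ (fun _ => True) FT.
exists Z0, (fun i => c (sval i)); rewrite /restr_limit; congr (hU _).
by apply: functional_extensionality_dep => i; rewrite (extend_in _ (Logic.I : sval Z0 i)).
Qed.

Lemma restr_limit_restr Z Y (p : large_le Z Y) (x : restr_alg Z) :
  restr_limit (restr p x) = restr_limit x.
Proof.
apply: restr_limit_eq => i HY HZ; rewrite /restr /=.
by congr (x (exist _ _ _)); apply: proof_irrelevance.
Qed.

Lemma restr_limit_kernel Z (x y : restr_alg Z) :
  restr_limit x = restr_limit y <-> exists Y (p : large_le Z Y), restr p x = restr p y.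
Proof.
split; last first.
  by move=> [Y [p E]]; rewrite -(restr_limit_restr p x) E restr_limit_restr.
case: F_ultra => [_ [_ [_ [FI _]]]] /hU_kernel E.
exists (exist _ (fun i => sval Z i /\ extend x i = extend y i) (FI _ _ (svalP Z) E)).
exists (fun i (H : sval Z i /\ _) => let: conj HZ _ := H in HZ).
apply: functional_extensionality_dep => -[i [HZ Hi]].
by rewrite /restr /= -(extend_in x HZ) -(extend_in y HZ).
Qed.

Lemma Lsop_ultraproduct (Y : cls sg) : (forall i, Y (C i)) -> Lsop (Pop Y) U.
Proof.
move=> YC; exists large, large_le, restr_alg, restr.
split; first exact: large_le_updirected.
split; first by move=> Z; apply: Pgen_prod_alg.
split; first by move=> Z W p; split; [by [] | exact: restr_surj].
split.
  move=> Z p x; apply: functional_extensionality_dep => -[i Hi]; rewrite /restr /=.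
  by congr (x (exist _ _ _)); apply: proof_irrelevance.
split.
  move=> Z W V p q r x; apply: functional_extensionality_dep => i; rewrite /restr /=.
  by congr (x (exist _ _ _)); apply: proof_irrelevance.
exists restr_limit; split; first exact: restr_limit_hom.
split; first exact: restr_limit_restr.
split; [exact: restr_limit_onto | exact: restr_limit_kernel].
Qed.
End UltraproductLimit.

Lemma Lsop_Pop_of_Puop sg (Y : cls sg) (U : alg sg) : Puop Y U -> Lsop (Pop Y) U.
Proof.
move=> [I [C [F [UF [YC [hU [hh [hs hk]]]]]]]]; case: (car_inh (prod_alg C)) => c0.
exact: (@Lsop_ultraproduct _ _ C F UF U hU hh hs hk c0 Y YC).
Qed.

Lemma Pop_Pgen_flatten sg (C : Type -> Prop) (X : cls sg) (A : alg sg) :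
  Pop (Pgen C X) A -> Pop X A.
Proof.
move=> [I [D [_ [PD [h [hh [hi hs]]]]]]].
have PD' i : exists s : {K : Type & {B : K -> alg sg & D i -> prod_alg B}},
    (forall k, X (projT1 (projT2 s) k)) /\ is_iso (projT2 (projT2 s)).
  by have [K [B [_ [XB [e He]]]]] := PD i; exists (existT _ K (existT _ B e)).
pose s i := proj1_sig (constructive_indefinite_description _ (PD' i)).
have sP i := proj2_sig (constructive_indefinite_description _ (PD' i)).
pose B (x : {i : I & projT1 (s i)}) := projT1 (projT2 (s (projT1 x))) (projT2 x).
pose e i : D i -> prod_alg (projT1 (projT2 (s i))) := projT2 (projT2 (s i)).
have eP i : is_iso (e i) := proj2 (sP i).
exists {i : I & projT1 (s i)}, B; split=> //; split; first by move=> [i k]; exact: (proj1 (sP i)).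
exists (fun a x => e (projT1 x) (h a (projT1 x)) (projT2 x)); split.
  move=> f args; apply: functional_extensionality_dep => -[i k] /=.
  by rewrite hh /= (proj1 (eP i)).
split.
  move=> a b E; apply: hi; apply: functional_extensionality_dep => i.
  case: (eP i) => _ [ei _]; apply: ei; apply: functional_extensionality_dep => k.
  exact: (f_equal (fun z => z (existT _ i k)) E).
move=> y; have Hc i : exists c, e i c = fun k => y (existT _ i k) by case: (eP i) => _ [_]; apply.
have [a Ha] := hs (fun i => proj1_sig (constructive_indefinite_description _ (Hc i))).
exists a; apply: functional_extensionality_dep => -[i k] /=; rewrite Ha.
by rewrite (proj2_sig (constructive_indefinite_description _ (Hc i))).
Qed.

Lemma Ceq_trans sg (X Y Z : cls sg) : Ceq X Y -> Ceq Y Z -> Ceq X Z.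
Proof. by move=> XY YZ A; rewrite XY YZ. Qed.

Lemma Sop_mono sg (X Y : cls sg) A : (forall B, X B -> Y B) -> Sop X A -> Sop Y A.
Proof. by move=> XY [B [XB R]]; exists B; split; auto. Qed.

Lemma Puop_mono sg (X Y : cls sg) A : (forall B, X B -> Y B) -> Puop X A -> Puop Y A.
Proof. by move=> XY [I [B [F [UF [XB R]]]]]; exists I, B, F; split=> //; split=> // i; auto. Qed.

Lemma Pgen_mono sg (C C' : Type -> Prop) (X Y : cls sg) A :
  (forall I, C I -> C' I) -> (forall B, X B -> Y B) -> Pgen C X A -> Pgen C' Y A.
Proof. by move=> CC' XY [I [B [CI [XB R]]]]; exists I, B; split; auto. Qed.

Lemma Lsop_mono sg (X Y : cls sg) A : (forall B, X B -> Y B) -> Lsop X A -> Lsop Y A.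
Proof.
move=> XY [I [le [B [h [Hle [XB R]]]]]]; exists I, le, B, h.
by split=> //; split=> // i; auto.
Qed.

Section Characterizations.
Variables (sg : signature) (X : cls sg).

Theorem Qclass_eq_SPPu : Ceq (Qclass X) (Sop (Pop (Puop X))).
Proof.
move=> A; split; first exact: Qclass_SPPu.
move=> H q Hq; apply: qholds_Sop H => B; apply: qholds_Pgen => C; exact: qholds_Puop.
Qed.

Theorem Qclass_eq_SPuPw : Ceq (Qclass X) (Sop (Puop (Pwop X))).
Proof.
move=> A; split; first exact: Qclass_SPuPw.
move=> H q Hq; apply: qholds_Sop H => B; apply: qholds_Puop => C; exact: qholds_Pgen.
Qed.

Theorem Qclass_eq_SPuP : Ceq (Qclass X) (Sop (Puop (Pop X))).
Proof.
move=> A; split.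
  by move=> /Qclass_SPuPw; apply: Sop_mono => B; apply: Puop_mono => C; apply: Pgen_mono.
move=> H q Hq; apply: qholds_Sop H => B; apply: qholds_Puop => C; exact: qholds_Pgen.
Qed.

Theorem Qclass_eq_SLsP : Ceq (Qclass X) (Sop (Lsop (Pop X))).
Proof.
move=> A; split.
  move=> /Qclass_SPuPw; apply: Sop_mono => B /Lsop_Pop_of_Puop.
  by apply: Lsop_mono => C; apply: Pop_Pgen_flatten.
move=> H q Hq; apply: qholds_Sop H => B; apply: qholds_Lsop => C; exact: qholds_Pgen.
Qed.

Theorem Qclass_eq_LsSP : Ceq (Qclass X) (Lsop (Sop (Pop X))).
Proof.
move=> A; split; first exact: Qclass_LsSP.
move=> H q Hq; apply: qholds_Lsop H => B; apply: qholds_Sop => C; exact: qholds_Pgen.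
Qed.

Theorem Qclass_eq_LsPsS : Ceq (Qclass X) (Lsop (Psop (Sop X))).
Proof.
move=> A; split; first exact: Qclass_LsPsS.
move=> H q Hq; apply: qholds_Lsop H => B; apply: qholds_Psop => C; exact: qholds_Sop.
Qed.
End Characterizations.

Theorem proposition5p4 (sg : signature) (K : cls sg) :
  Ceq (HQ K) (Sop (Pop (Puop (Dop K)))) /\
  Ceq (HQ K) (Sop (Puop (Pop (Dop K)))) /\
  Ceq (HQ K) (Sop (Puop (Pwop (Dop K)))) /\
  Ceq (HQ K) (Sop (Lsop (Pop (Dop K)))) /\
  Ceq (HQ K) (Lsop (Sop (Pop (Dop K)))) /\
  Ceq (HQ K) (Lsop (Psop (Sop (Dop K)))).
Proof.
have HQ_D := HQ_Qclass_Dop K.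
split; first exact: Ceq_trans HQ_D (Qclass_eq_SPPu _).
split; first exact: Ceq_trans HQ_D (Qclass_eq_SPuP _).
split; first exact: Ceq_trans HQ_D (Qclass_eq_SPuPw _).
split; first exact: Ceq_trans HQ_D (Qclass_eq_SLsP _).
split; first exact: Ceq_trans HQ_D (Qclass_eq_LsSP _).
exact: Ceq_trans HQ_D (Qclass_eq_LsPsS _).
Qed.
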